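(* Any quantum oracle algorithm that solves $\mathsf{DL\text{-}LCS\text{-}RLE}$ with probability at least $2/3$ requires $\Omega(n)$ queries, where $n$ is the encoded length of the inputs.
   Context: A string $\tilde s$ has run-length encoding (RLE) $s=s[1]\cdots s[m]$, its sequence of maximal runs of identical characters, each run having character $C(s[i])$ and length $R(s[i])$; $|s|=m$ is the encoded length. The problem $\mathsf{DL\text{-}LCS\text{-}RLE}$: given quantum oracle access to two RLE strings $A$ and $B$ only through the unitaries $|i\rangle|c\rangle|r\rangle\mapsto|i\rangle|c\oplus C(S[i])\rangle|r\oplus R(S[i])\rangle$ for $S\in\{A,B\}$ (no prefix-sum oracle), compute $|\tilde s|$ where $\tilde s$ is a longest common substring of the decoded strings $\tilde A$ and $\tilde B$. *)

From mathcomp Require Import all_boot all_order all_algebra all_field.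
From mathcomp Require Import spectral.
Set Implicit Arguments. Unset Strict Implicit. Unset Printing Implicit Defensive.
Import Order.TTheory GRing.Theory Num.Theory.
Local Open Scope ring_scope.

(* An RLE string is a sequence of runs (character, run length).  Position i
   (0-based here, 1-based in the paper) has C(s[i]) = (nth (0,0) s i).1 and
   R(s[i]) = (nth (0,0) s i).2.                                              *)
Definition rle := seq (nat * nat).

(* well-formed RLE string of encoded length n, characters coded in a bits
   (alphabet {0,...,2^a-1}) and run lengths fitting in b bits; consecutive runs
   have distinct characters (runs are maximal); run lengths are >= 1.        *)
Definition valid_rle (a b n : nat) (s : rle) : bool :=
  [&& size s == n,
      all (fun p => (p.1 < 2 ^ a)%N && (0 < p.2 < 2 ^ b)%N) s
    & sorted (fun p q => p.1 != q.1) s].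

Definition decode (s : rle) : seq nat := flatten [seq nseq p.2 p.1 | p <- s].

Definition lcsub_len (x y : seq nat) : nat :=
  \max_(w <- [seq take k (drop i x) | i <- iota 0 (size x).+1, k <- iota 0 (size x).+1]
         | infix w y) size w.

Definition DL_LCS_RLE (A B : rle) : nat := lcsub_len (decode A) (decode B).

Definition bits (k x : nat) : k.-tuple bool := [tuple odd (x %/ 2 ^ j) | j < k].
Definition txor (k : nat) (u v : k.-tuple bool) : k.-tuple bool :=
  [tuple (tnth u j) (+) (tnth v j) | j < k].

(* computational basis: index register |i>, character register |c> (a qubits),
   length register |r> (b qubits), workspace of dimension m *)
Definition basis (n a b m : nat) : finType :=
  ('I_n * a.-tuple bool * b.-tuple bool * 'I_m)%type.
Definition dim (n a b m : nat) : nat := #|{: basis n a b m}|.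

Definition oracle_map (n a b m : nat) (S : rle) (x : basis n a b m) : basis n a b m :=
  let: (i, c, r, w) := x in
  (i, txor c (bits a (nth (0, 0)%N S i).1), txor r (bits b (nth (0, 0)%N S i).2), w).

Definition oracle (n a b m : nat) (S : rle) : 'M[algC]_(dim n a b m) :=
  \matrix_(x, y) ((enum_val x == oracle_map S (enum_val y)) %:R).

(* A T-query algorithm: initial unit state psi0, unitaries U 0, ..., U T,
   the t-th query (t < T) goes to A if sel t = true and to B otherwise, and a
   final measurement in the computational basis followed by classical
   post-processing out. *)
Record qalg (n a b : nat) := QAlg {
  ws : nat;
  nq : nat;
  psi0 : 'cV[algC]_(dim n a b ws);
  U : nat -> 'M[algC]_(dim n a b ws);
  sel : nat -> bool;
  out : basis n a b ws -> nat
}.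

Definition qalg_wf (n a b : nat) (Q : qalg n a b) : Prop :=
  (\sum_(x < dim n a b (ws Q)) `|psi0 Q x 0| ^+ 2 = 1) /\
  (forall t, (t <= nq Q)%N -> U Q t \is unitarymx).

Fixpoint run_state (n a b : nat) (Q : qalg n a b) (A B : rle) (t : nat)
  : 'cV[algC]_(dim n a b (ws Q)) :=
  match t with
  | 0 => U Q 0 *m psi0 Q
  | t'.+1 => U Q t *m (@oracle n a b (ws Q) (if sel Q t' then A else B) *m run_state Q A B t')
  end.

Definition prob_out (n a b : nat) (Q : qalg n a b) (A B : rle) (v : nat) : algC :=
  \sum_(x < dim n a b (ws Q) | @out n a b Q (enum_val x) == v)
     `|@run_state n a b Q A B (nq Q) x 0| ^+ 2.

From Pilot Require Import Defs.
From mathcomp Require Import all_boot all_order all_algebra all_field spectral.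
Import Order.TTheory GRing.Theory Num.Theory.
Set Implicit Arguments. Unset Strict Implicit. Unset Printing Implicit Defensive.
Local Open Scope ring_scope.

(* Restrict the algorithm to inputs A = B encoding a bit string x: bit x_i
   becomes a run of length 1 + x_i, with alternating characters.  The answer is
   then n + |x|, so the algorithm computes the parity of x.  Every oracle entry
   depends on one bit of x, so after T queries each amplitude is a sum of
   functions of at most T bits and the bias E[(-1)^output] one of functions of
   at most 2T bits.  Such a function is orthogonal to the parity character when
   2T < n, whereas correctness makes it sign-represent parity; hence n <= 2T. *)

Definition sqnorm N (v : 'cV[algC]_N) : algC := \sum_i `|v i 0| ^+ 2.

Lemma sqnormE N (v : 'cV[algC]_N) : sqnorm v = ((map_mx Num.conj v)^T *m v) 0 0.
Proof. by rewrite mxE; apply: eq_bigr => i _; rewrite !mxE normCK mulrC. Qed.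

Lemma sqnorm_unitary N (M : 'M[algC]_N) v :
  M \is unitarymx -> sqnorm (M *m v) = sqnorm v.
Proof.
move=> /unitarymxP MMt; have MtM : (map_mx Num.conj M)^T *m M = 1%:M.
  by apply: mulmx1C; rewrite -MMt map_trmx.
by rewrite !sqnormE map_mxM trmx_mul -mulmxA (mulmxA _ M) MtM mul1mx.
Qed.

Lemma txorK k (v : k.-tuple bool) : involutive ((@txor k)^~ v).
Proof. by move=> u; apply: eq_from_tnth => j; rewrite !tnth_mktuple addbK. Qed.

Lemma oracle_mapK n a b m S : involutive (@oracle_map n a b m S).
Proof. by case=> [[[i c] r] w] /=; rewrite !txorK. Qed.

Lemma mul_oracle n a b m S (v : 'cV_(Defs.dim n a b m)) x :
  (oracle n a b m S *m v) x 0 = v (enum_rank (oracle_map S (enum_val x))) 0.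
Proof.
rewrite mxE (bigD1 (enum_rank (oracle_map S (enum_val x)))) //= !mxE.
rewrite enum_rankK oracle_mapK eqxx mul1r big1 ?addr0 // => y y_neq.
rewrite !mxE; case: eqP => [xE|_]; last by rewrite mul0r.
by move: y_neq; rewrite xE oracle_mapK enum_valK eqxx.
Qed.

Lemma sqnorm_oracle n a b m S (v : 'cV_(Defs.dim n a b m)) :
  sqnorm (oracle n a b m S *m v) = sqnorm v.
Proof.
pose rho (x : 'I_(Defs.dim n a b m)) := enum_rank (oracle_map S (enum_val x)).
have rhoK : involutive rho by move=> x; rewrite /rho enum_rankK oracle_mapK enum_valK.
rewrite /sqnorm [RHS](reindex_inj (inv_inj rhoK)).
by apply: eq_bigr => x _; rewrite mul_oracle.
Qed.

Lemma sqnorm_run_state n a b (Q : qalg n a b) A B t :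
  qalg_wf Q -> (t <= nq Q)%N -> sqnorm (run_state Q A B t) = 1.
Proof.
case=> psi0_unit U_unitary; elim: t => [|t IHt] t_le /=.
  by rewrite sqnorm_unitary ?U_unitary //; exact: psi0_unit.
by rewrite sqnorm_unitary ?U_unitary // sqnorm_oracle IHt // ltnW.
Qed.

Definition cube n := {ffun 'I_n -> bool}.

Section Degree.
Variable n : nat.
Implicit Types (f g h : cube n -> algC) (S : {set 'I_n}).

Definition depends_on S g := forall x y : cube n, {in S, x =1 y} -> g x = g y.

(* [deg_le d f]: f is a sum of functions each reading at most d bits, i.e. a
   polynomial of degree at most d in the bits of x. *)
Inductive deg_le (d : nat) : (cube n -> algC) -> Prop :=
| DegDepends S g : (#|S| <= d)%N -> depends_on S g -> deg_le d g
| DegAdd f g h : deg_le d f -> deg_le d g -> h =1 f \+ g -> deg_le d h.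

Lemma eq_deg_le d f g : f =1 g -> deg_le d f -> deg_le d g.
Proof.
move=> fg f_deg; case: f_deg fg => [S f' S_le f'_dep|f1 f2 f' f1_deg f2_deg f'E] fg.
  by apply: (DegDepends S_le) => x y xy; rewrite -!fg; apply: f'_dep.
by apply: DegAdd f1_deg f2_deg _ => x; rewrite -fg f'E.
Qed.

Lemma deg_le_cst d (c : algC) : deg_le d (fun=> c).
Proof. by apply: (@DegDepends _ set0) => //; rewrite cards0. Qed.

Lemma deg_le_sum d (I : Type) (r : seq I) (P : pred I) (F : I -> cube n -> algC) :
  (forall i, P i -> deg_le d (F i)) -> deg_le d (fun x => \sum_(i <- r | P i) F i x).
Proof.
move=> F_deg; elim: r => [|i r IHr].
  by apply: eq_deg_le (deg_le_cst d 0) => x; rewrite big_nil.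
case Pi: (P i); last by apply: eq_deg_le IHr => x; rewrite big_cons Pi.
by apply: DegAdd (F_deg i Pi) IHr _ => x; rewrite big_cons Pi.
Qed.

Lemma deg_leM d1 d2 f g :
  deg_le d1 f -> deg_le d2 g -> deg_le (d1 + d2) (fun x => f x * g x).
Proof.
elim=> [S f' S_le f'_dep|f1 f2 f' _ IH1 _ IH2 f'E] g_deg; last first.
  by apply: DegAdd (IH1 g_deg) (IH2 g_deg) _ => x /=; rewrite f'E mulrDl.
elim: g_deg => [T g' T_le g'_dep|g1 g2 g' _ IH1 _ IH2 g'E]; last first.
  by apply: DegAdd IH1 IH2 _ => x /=; rewrite g'E mulrDr.
apply: (@DegDepends _ (S :|: T)).
  by rewrite cardsU (leq_trans (leq_subr _ _)) // leq_add.
move=> x y xy /=; rewrite (f'_dep x y) ?(g'_dep x y) // => i i_in;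
  by apply: xy; rewrite inE i_in ?orbT.
Qed.

Lemma deg_leZ d (c : algC) f : deg_le d f -> deg_le d (fun x => c * f x).
Proof. exact: deg_leM (deg_le_cst 0 c). Qed.

Lemma deg_le_conj d f : deg_le d f -> deg_le d (fun x => (f x)^*).
Proof.
elim=> [S g S_le g_dep|f1 f2 g _ IH1 _ IH2 gE].
  by apply: (DegDepends S_le) => x y xy; rewrite (g_dep x y).
by apply: DegAdd IH1 IH2 _ => x /=; rewrite gE rmorphD.
Qed.

End Degree.

Section Parity.
Variable n : nat.

Definition flip (j : 'I_n) (x : cube n) : cube n := [ffun i => (i == j) (+) x i].

Definition hamming (x : cube n) : nat := \sum_i x i.

Lemma flipK j : involutive (flip j).
Proof. by move=> x; apply/ffunP => i; rewrite !ffunE addKb. Qed.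

Lemma sign_hamming_flip j x :
  (-1) ^+ hamming (flip j x) = - (-1) ^+ hamming x :> algC.
Proof.
rewrite /hamming (bigD1 j) // [in RHS](bigD1 j) //= ffunE eqxx !exprD.
rewrite (eq_bigr (fun i => x i : nat)) => [|i /negbTE ij]; last by rewrite ffunE ij.
by case: (x j); rewrite ?expr0 ?expr1 ?mul1r ?mulN1r ?opprK.
Qed.

Lemma sum_sign_hamming_deg_lt d (f : cube n -> algC) :
  deg_le d f -> (d < n)%N -> \sum_x (-1) ^+ hamming x * f x = 0.
Proof.
move=> f_deg d_lt; elim: f_deg => [S g S_le g_dep|f1 f2 g _ IH1 _ IH2 gE].
  have [j jS] : exists j, j \in ~: S.
    apply/card_gt0P; rewrite -(leq_add2l #|S|) cardsC card_ord addn1.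
    exact: leq_ltn_trans S_le d_lt.
  set s := \sum_x _; suff s_opp : s = - s.
    have /eqP : s *+ 2 = 0 by rewrite mulr2n {1}s_opp addNr.
    by rewrite mulrn_eq0 => /eqP.
  rewrite /s [LHS](reindex_inj (inv_inj (flipK j))) -sumrN.
  apply: eq_bigr => x _; rewrite sign_hamming_flip mulNr (g_dep _ x) // => i iS.
  by rewrite ffunE; case: eqP => // ij; move: jS; rewrite -ij inE iS.
under eq_bigr do rewrite gE mulrDr.
by rewrite big_split /= IH1 IH2 addr0.
Qed.

Lemma sign_hamming_deg_ge d (f : cube n -> algC) :
  deg_le d f -> (forall x, 0 < (-1) ^+ hamming x * f x) -> (n <= d)%N.
Proof.
move=> f_deg f_sign; rewrite leqNgt; apply/negP => d_lt.
have /eqP := psumr_eq0P (fun x _ => ltW (f_sign x))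
  (sum_sign_hamming_deg_lt f_deg d_lt) (i := [ffun=> false]) isT.
by rewrite gt_eqF ?f_sign.
Qed.

End Parity.

Section QueryDegree.
Variables (n a b : nat).

Definition local_rle (E : cube n -> rle) :=
  forall (i : 'I_n) (x y : cube n),
    x i = y i -> nth (0, 0)%N (E x) i = nth (0, 0)%N (E y) i.

Lemma deg_le_oracle m (E : cube n -> rle) z w :
  local_rle E -> deg_le 1 (fun x => oracle n a b m (E x) z w).
Proof.
move=> E_local; apply: (@DegDepends _ _ [set (enum_val w).1.1.1]); first by rewrite cards1.
move=> x y xy; rewrite !mxE; case: (enum_val w) xy => [[[i c] r] v] /= xy.
by rewrite (E_local i x y) ?xy ?set11.
Qed.

Lemma deg_le_run_state (Q : qalg n a b) (A B : cube n -> rle) t y :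
  local_rle A -> local_rle B ->
  deg_le t (fun x => run_state Q (A x) (B x) t y 0).
Proof.
move=> A_local B_local; elim: t y => [|t IHt] y /=; first exact: deg_le_cst.
have query_local : local_rle (fun x => if sel Q t then A x else B x).
  by case: (sel Q t).
apply: eq_deg_le (_ : deg_le t.+1 (fun x => \sum_z U Q t.+1 y z *
   \sum_w oracle n a b (ws Q) (if sel Q t then A x else B x) z w
          * run_state Q (A x) (B x) t w 0)) => [x|].
  by rewrite !mxE; apply: eq_bigr => z _; rewrite !mxE; case: (sel Q t).
apply: deg_le_sum => z _; apply: deg_leZ; apply: deg_le_sum => w _.
exact: deg_leM (deg_le_oracle z w query_local) (IHt w).
Qed.

Lemma deg_le_sqnorm_run_state (Q : qalg n a b) (A B : cube n -> rle) t
    (c : 'I_(Defs.dim n a b (ws Q)) -> algC) :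
  local_rle A -> local_rle B ->
  deg_le (t + t) (fun x => \sum_y c y * `|run_state Q (A x) (B x) t y 0| ^+ 2).
Proof.
move=> A_local B_local; apply: deg_le_sum => y _; apply: deg_leZ.
have st_deg := deg_le_run_state (Q := Q) t y A_local B_local.
by apply: eq_deg_le (deg_leM st_deg (deg_le_conj st_deg)) => x; rewrite normCK.
Qed.

End QueryDegree.

Lemma one_lt_two_thirds_twice : 1 < (2%:R / 3%:R : algC) *+ 2.
Proof. by rewrite -mulrnAl -mulr_natr -natrM ltr_pdivlMr ?ltr0n // mul1r ltr_nat. Qed.

Lemma parity_bias_gt0 N (o : 'I_N -> nat) (v : 'cV[algC]_N) m :
  sqnorm v = 1 -> 2%:R / 3%:R <= \sum_(i | o i == m) `|v i 0| ^+ 2 ->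
  0 < (-1) ^+ m * \sum_i (-1) ^+ o i * `|v i 0| ^+ 2.
Proof.
move=> v_unit v_correct; set p := fun i => `|v i 0| ^+ 2.
have p_ge0 i : 0 <= p i by rewrite exprn_ge0.
pose q i := if o i == m then p i else - p i.
have q_le i : q i <= (-1) ^+ m * ((-1) ^+ o i * p i).
  rewrite /q mulrA -exprD -signr_odd; case: eqP => [->|_].
    by rewrite addnn odd_double mul1r.
  by case: odd; rewrite ?mul1r ?mulN1r ?(ge0_cp (p_ge0 i)).
set pm := \sum_(i | o i == m) p i.
have sum_q : \sum_i q i = pm - \sum_(i | o i != m) p i.
  rewrite (bigID (fun i => o i == m)) /= -sumrN.
  by congr (_ + _); apply: eq_bigr => i om; rewrite /q ?om ?(negbTE om).
have rest_p : \sum_(i | o i != m) p i = 1 - pm.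
  by rewrite -v_unit /sqnorm [in RHS](bigID (fun i => o i == m)) addrAC subrr add0r.
rewrite mulr_sumr; apply: lt_le_trans (ler_sum _ (fun i _ => q_le i)).
rewrite sum_q rest_p opprB addrA -mulr2n subr_gt0.
by apply: lt_le_trans one_lt_two_thirds_twice _; rewrite lerMn2r.
Qed.

Definition rle_of_cube n (x : cube n) : rle :=
  [seq ((odd i : nat), (x i).+1) | i : 'I_n <- enum 'I_n].

Lemma nth_rle_of_cube n (x : cube n) (i : 'I_n) :
  nth (0, 0)%N (rle_of_cube x) i = ((odd i : nat), (x i).+1).
Proof. by rewrite (nth_map i) ?size_enum_ord // nth_ord_enum. Qed.

Lemma rle_of_cube_local n : local_rle (@rle_of_cube n).
Proof. by move=> i x y xy; rewrite !nth_rle_of_cube xy. Qed.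

Lemma sorted_odd_iota m k : sorted (fun i j => odd i != odd j) (iota m k).
Proof.
elim: k m => [|[|k] IHk] m //=; apply/andP; split; last exact: IHk.
by case: (odd m).
Qed.

Lemma valid_rle_of_cube n a b (x : cube n) :
  (1 <= a)%N -> (2 <= b)%N -> valid_rle a b n (rle_of_cube x).
Proof.
move=> a_gt0 b_ge2; rewrite /valid_rle size_map size_enum_ord eqxx /=.
have two_le : (2 ^ 1 <= 2 ^ a)%N by rewrite leq_exp2l.
have four_le : (2 ^ 2 <= 2 ^ b)%N by rewrite leq_exp2l.
apply/andP; split.
  apply/allP => _ /mapP [i _ ->] /=.
  rewrite (leq_trans _ two_le) ?(leq_trans _ four_le) //= ltnS ?leq_b1 //.
  by rewrite ltnS ltnW // ltnS leq_b1.
rewrite sorted_map; have := sorted_odd_iota 0 n; rewrite -val_enum_ord sorted_map.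
by apply: sub_sorted => i j /=; case: (odd i); case: (odd j).
Qed.

Lemma lcsub_len_refl (s : seq nat) : lcsub_len s s = size s.
Proof.
apply/eqP; rewrite /lcsub_len eqn_leq; apply/andP; split.
  by apply/bigmax_leqP_seq => w _ /size_infix.
have s_in : s \in [seq take k (drop i s) | i <- iota 0 (size s).+1, k <- iota 0 (size s).+1].
  by apply/allpairsP; exists (0%N, size s); rewrite !mem_iota /= drop0 take_size.
by apply: (leq_bigmax_seq s s_in); exact: infix_refl.
Qed.

Lemma size_decode (s : rle) : size (decode s) = (\sum_(p <- s) p.2)%N.
Proof.
rewrite size_flatten /shape -map_comp sumnE big_map.
by apply: eq_bigr => p _ /=; rewrite size_nseq.
Qed.

Lemma DL_LCS_RLE_of_cube n (x : cube n) :
  DL_LCS_RLE (rle_of_cube x) (rle_of_cube x) = (n + hamming x)%N.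
Proof.
rewrite /DL_LCS_RLE lcsub_len_refl size_decode big_map big_enum /=.
by rewrite /hamming -[n in (n + _)%N]card_ord -sum1_card -big_split.
Qed.

Theorem lemma7 :
  exists (k N0 : nat), (0 < k)%N /\
    forall (n a b : nat), (N0 <= n)%N -> (1 <= a)%N -> (2 <= b)%N ->
    forall Q : qalg n a b, qalg_wf Q ->
      (forall A B : rle, valid_rle a b n A -> valid_rle a b n B ->
         2%:R / 3%:R <= prob_out Q A B (DL_LCS_RLE A B)) ->
      (n <= k * nq Q)%N.
Proof.
exists 2%N, 0%N; split=> // n a b _ a_gt0 b_ge2 Q Q_wf Q_correct.
pose bias (x : cube n) := \sum_(y < Defs.dim n a b (ws Q)) (-1) ^+ out (enum_val y) *
  `|run_state Q (rle_of_cube x) (rle_of_cube x) (nq Q) y 0| ^+ 2.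
rewrite mul2n -addnn; apply: (@sign_hamming_deg_ge _ _ (fun x => (-1) ^+ n * bias x)).
  exact/deg_leZ/deg_le_sqnorm_run_state/rle_of_cube_local/rle_of_cube_local.
move=> x; rewrite mulrA -exprD addnC -DL_LCS_RLE_of_cube.
have x_valid := valid_rle_of_cube x a_gt0 b_ge2.
exact: parity_bias_gt0 (sqnorm_run_state _ _ Q_wf (leqnn _)) (Q_correct _ _ x_valid x_valid).
Qed.
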